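(* Let $k\ge 3$ and let $c$ be a proper coloring of $\mathcal H_k$. Then for any $i_1,i_2\in[k]$ with $i_1\equiv i_2\pmod 2$, we have $c(v_{i_1,j})=c(v_{i_2,j})$ for all $j\in[3]$.
   Context: A bi-hypergraph $\mathcal H=(V,E)$ consists of a finite vertex set $V$ and a set $E$ of subsets of $V$, called edges, with no edge contained in another. A mapping $f:V\to\mathbb N$ is a proper coloring of $\mathcal H$ if $1<|f(e)|<|e|$ for every $e\in E$, where $f(e)=\{f(v):v\in e\}$. For $k\ge 2$, $\mathcal H_k$ is the $3$-uniform bi-hypergraph with vertex set $\{v_{i,j}: i\in[k], j\in[3]\}$ (all distinct), where we use the convention $v_{i,4}=v_{i,1}$, $v_{i,5}=v_{i,2}$, and whose edges are: the sets $V_i=\{v_{i,1},v_{i,2},v_{i,3}\}$ for all $i\in[k]$, and the sets $\{v_{q+1,j},v_{q,j},v_{q,j+t}\}$ for all $q\in[k-1]$, $j\in[3]$, $t\in\{1,2\}$. *)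

From mathcomp Require Import all_boot.
Set Implicit Arguments. Unset Strict Implicit. Unset Printing Implicit Defensive.

(* |f(e)| is the number of distinct colours on e. *)
Definition proper_coloring (V : finType) (E : pred {set V}) (f : V -> nat) :=
  forall e : {set V}, E e -> 1 < size (undup [seq f x | x in e]) < #|e|.

(* H_k: vertex v_{i,j} (i in [k], j in [3]) is encoded as (i-1, j-1) : 'I_k * 'I_3.
   Indices in the third coordinate are taken mod 3 (v_{i,4} = v_{i,1}, ...). *)
Definition Hvert (k : nat) := ('I_k * 'I_3)%type.

Definition Hedge (k : nat) : pred {set Hvert k} :=
  fun e =>
    [exists i : 'I_k, e == [set x : Hvert k | x.1 == i]]
    || [exists q : 'I_k, exists j : 'I_3, exists t : 'I_3,
          [&& q.+1 < k, (0 < t)%N &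
              e == [set x : Hvert k | (nat_of_ord x.1 == q.+1) && (x.2 == j)
                      || (x.1 == q) && ((nat_of_ord x.2 == j)
                                       || (nat_of_ord x.2 == (j + t) %% 3))]]].

From mathcomp Require Import all_boot zify.
Set Implicit Arguments. Unset Strict Implicit. Unset Printing Implicit Defensive.

(* Every edge of H_k has three vertices, so a proper colouring gives every
   edge exactly two colours ("bicoloured").  Write row i for the colouring
   j |-> c(v_{i,j}) of the layer V_i.  The layer edges say that each row is
   bicoloured, and the cross edges {v_{q+1,j}, v_{q,j}, v_{q,j'}} (j <> j')
   say that consecutive rows a, b are "adjacent".  The heart of the proof is
   a statement about rows indexed by any finite set with at least three
   elements: if a and b are bicoloured and adjacent, then every b j differs
   from a j and is one of the two colours of a.  For three bicoloured rows
   a, b, d with a ~ b ~ d, the values a j, b j, d j then lie in a two-element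
   set with a j <> b j <> d j, so d j = a j.  Hence row (q+2) = row q, and the
   theorem follows by induction on the distance between layers of equal
   parity. *)

Section Bicoloured.
Variable T : eqType.

Definition bicoloured (s : seq T) := size (undup s) == 2.

Lemma bicoloured_pigeonhole s u v w :
  bicoloured s -> u \in s -> v \in s -> w \in s -> u != v -> v != w -> u = w.
Proof.
move=> /eqP s2 us vs ws uv vw; apply/eqP/negPn/negP => uw.
have : size [:: u; v; w] <= size (undup s).
  apply: uniq_leq_size => [|x]; first by rewrite /= !inE !negb_or uv uw vw.
  by rewrite mem_undup !inE => /or3P [] /eqP ->.
by rewrite s2.
Qed.

Lemma bicoloured_nonconst s u :
  bicoloured s -> u \in s -> exists2 v, v \in s & v != u.
Proof.
move=> /eqP s2 us; have [/hasP // | ] := boolP (has (predC1 u) s).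
rewrite -all_predC => /allP allu.
have : size (undup s) <= size [:: u].
  apply: uniq_leq_size => [|x]; rewrite ?undup_uniq // mem_undup.
  by move=> /allu /= /negPn /eqP ->; rewrite inE.
by rewrite s2.
Qed.

Lemma bicoloured_neq x y : bicoloured [:: x; y; y] -> x != y.
Proof.
move=> bc; apply/negP => /eqP xy; case: (bicoloured_nonconst bc (mem_head x _)) => v.
by rewrite !inE => /or3P [] /eqP ->; rewrite xy eqxx.
Qed.

Lemma bicoloured_mem x y z : y != z -> bicoloured [:: x; y; z] -> x = y \/ x = z.
Proof.
move=> yz bc; have [-> | xy] := eqVneq x y; first by left.
by right; apply: (bicoloured_pigeonhole (v := y) bc); rewrite ?inE ?eqxx ?orbT.
Qed.
End Bicoloured.

Section Layers.
Variables (T : eqType) (I : finType).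
Hypothesis card_I : 2 < #|I|.

Definition adjacent (a b : I -> T) :=
  forall j j', j != j' -> bicoloured [:: b j; a j; a j'].

Lemma third_index (j j' : I) : exists j'', (j'' != j) && (j'' != j').
Proof.
have : 0 < #|~: [set j; j']|.
  by rewrite cardsCs setCK cards2 subn_gt0; apply: leq_ltn_trans card_I; case: (_ != _).
by case/card_gt0P => j''; rewrite !inE negb_or; exists j''.
Qed.

Section Step.
Variables a b : I -> T.
Hypotheses (col_a : bicoloured (codom a)) (col_b : bicoloured (codom b)).
Hypothesis adj : adjacent a b.

Lemma adjacent_codom j : b j \in codom a.
Proof.
have [_ /codomP [j' ->]] := bicoloured_nonconst col_a (codom_f a j).
rewrite eq_sym => ajj'; have jj' : j != j' by apply: contraNneq ajj' => ->.
by case: (bicoloured_mem ajj' (adj jj')) => ->; exact: codom_f.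
Qed.

Lemma adjacent_shared j j' : j != j' -> a j' = a j -> b j != a j.
Proof. by move=> jj' aj'; apply: bicoloured_neq; rewrite -{2}aj'; exact: adj. Qed.

(* When a j is the
   colour occurring only once in row a, the entries above the two other
   positions are forced to a j, so b j = a j would make row b constant. *)
Lemma adjacent_neq j : b j != a j.
Proof.
have [shared | lonely] := boolP [exists j', (j' != j) && (a j' == a j)].
  case/existsP: shared => j' /andP [j'j /eqP aj'].
  by apply: adjacent_shared aj'; rewrite eq_sym.
have neq_aj i : i != j -> a i != a j.
  by move=> ij; apply: contra lonely => aij; apply/existsP; exists i; rewrite ij.
apply/negP => /eqP bj.
have bconst j' : b j' = a j.
  have [-> // | j'j] := eqVneq j' j.
  have [j'' /andP [j''j j''j']] := third_index j j'.
  have aj'' : a j'' = a j'.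
    apply: (bicoloured_pigeonhole (v := a j) col_a); rewrite ?codom_f ?neq_aj //.
    by rewrite eq_sym neq_aj.
  case: (bicoloured_mem (neq_aj _ j'j) (adj j'j)) => // bj'.
  have j'j'' : j' != j'' by rewrite eq_sym.
  by move: (adjacent_shared j'j'' aj''); rewrite bj' eqxx.
have [_ /codomP [i ->]] := bicoloured_nonconst col_b (codom_f b j).
by rewrite !bconst eqxx.
Qed.
End Step.

Lemma two_layers a b d :
  bicoloured (codom a) -> bicoloured (codom b) -> bicoloured (codom d) ->
  adjacent a b -> adjacent b d -> d =1 a.
Proof.
move=> col_a col_b col_d ab bd j.
have b_a i : b i \in codom a by exact: adjacent_codom.
have d_a : d j \in codom a.
  by have /codomP [i ->] := adjacent_codom col_b bd j; exact: b_a.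
apply: (bicoloured_pigeonhole col_a d_a (b_a j) (codom_f a j)).
- exact: (adjacent_neq col_b col_d bd).
- exact: (adjacent_neq col_a col_b ab).
Qed.
End Layers.

Lemma period_two_parity (X : Type) (k : nat) (g : 'I_k -> X) :
  (forall i i' : 'I_k, val i' = i.+2 -> g i' = g i) ->
  forall i1 i2 : 'I_k, odd i1 = odd i2 -> g i1 = g i2.
Proof.
move=> shift2.
suff up d (i1 i2 : 'I_k) : val i2 = i1 + d.*2 -> g i2 = g i1.
  move=> i1 i2 par; wlog le12 : i1 i2 par / i1 <= i2 => [hw|].
    by case: (leqP i1 i2) => [|/ltnW] h; [apply: hw | symmetry; apply: hw].
  symmetry; apply: (up ((i2 - i1)./2)).
  by rewrite halfK oddB // par addbb subn0 subnKC.
elim: d i2 => [|d IH] i2 i2E; first by congr g; apply: val_inj; rewrite i2E addn0.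
have lt : i1 + d.*2 < k by move: (ltn_ord i2); rewrite i2E doubleS; lia.
by rewrite (shift2 (Ordinal lt)) ?(IH (Ordinal lt)) // i2E doubleS /=; lia.
Qed.

Lemma edge_bicoloured (V : finType) (T : eqType) (c : V -> T) (e : {set V}) (s : seq V) :
  size s = 3 -> uniq s -> e =i s ->
  1 < size (undup [seq c v | v in e]) < #|e| -> bicoloured (map c s).
Proof.
move=> s3 uniq_s es; rewrite (eq_card es) (card_uniqP uniq_s) s3.
suff -> : size (undup [seq c v | v in e]) = size (undup (map c s)).
  by rewrite /bicoloured; case: (size _) => [|[|[|]]].
by apply/perm_size/perm_undup/eq_mem_map => v; rewrite mem_enum.
Qed.

Section Hk.
Variables (k : nat) (c : Hvert k -> nat).
Hypothesis proper_c : proper_coloring (@Hedge k) c.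

Definition row (i : 'I_k) (j : 'I_3) : nat := c (i, j).

Lemma row_bicoloured i : bicoloured (codom (row i)).
Proof.
have -> : codom (row i) = map c [seq (i, j) | j <- enum 'I_3].
  by rewrite codomE -[RHS]map_comp.
apply: (edge_bicoloured (e := [set x : Hvert k | x.1 == i])).
- by rewrite size_map size_enum_ord.
- by rewrite map_inj_uniq ?enum_uniq // => j j' [].
- case=> i' j; rewrite inE /=; apply/eqP/mapP => [-> | [j' _ [-> _]] //].
  by exists j; rewrite ?mem_enum.
- by apply: proper_c; apply/orP; left; apply/existsP; exists i.
Qed.

(* The cross edges between V_q and V_{q+1} make consecutive rows adjacent;
   the edge for j <> j' uses the shift t = j' - j mod 3. *)
Lemma rows_adjacent (q q1 : 'I_k) : val q1 = q.+1 -> adjacent (row q) (row q1).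
Proof.
move=> q1E j j' jj'.
pose t : 'I_3 := Ordinal (ltn_pmod (j' + 3 - j) (isT : 0 < 3)).
have tE : val t = (j' + 3 - j) %% 3 by [].
have j'E : val j' = (j + t) %% 3.
  by rewrite tE; move: (ltn_ord j) (ltn_ord j') jj'; rewrite -val_eqE /=; lia.
pose e := [set x : Hvert k | (nat_of_ord x.1 == q.+1) && (x.2 == j)
              || (x.1 == q) && ((nat_of_ord x.2 == j) || (nat_of_ord x.2 == (j + t) %% 3))].
apply: (edge_bicoloured (e := e) (s := [:: (q1, j); (q, j); (q, j')])) => //.
- have q1q : q1 != q by rewrite -val_eqE q1E /=; lia.
  by rewrite /= !inE !xpair_eqE (negPf q1q) (negPf jj') /= andbF.
- case=> x1 x2; rewrite !inE !xpair_eqE /= -q1E -j'E !val_eqE.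
  by case: (x1 == q1); case: (x1 == q); case: (x2 == j); case: (x2 == j').
- apply: proper_c; apply/orP; right; apply/existsP; exists q; apply/existsP; exists j.
  apply/existsP; exists t; rewrite -{1}q1E ltn_ord eqxx andbT tE.
  by move: (ltn_ord j) (ltn_ord j') jj'; rewrite -val_eqE /=; lia.
Qed.

Lemma row_shift2 (q q2 : 'I_k) : val q2 = q.+2 -> row q2 =1 row q.
Proof.
move=> q2E; have lt1 : q.+1 < k by rewrite (leq_trans _ (ltn_ord q2)) ?q2E.
pose q1 : 'I_k := Ordinal lt1.
apply: (@two_layers _ _ _ _ (row q1)); rewrite ?card_ord ?row_bicoloured //.
- exact: (rows_adjacent (q1 := q1)).
- exact: (rows_adjacent (q := q1)).
Qed.
End Hk.

Theorem mainTheorem14 (k : nat) (hk : 3 <= k) (c : Hvert k -> nat) :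
  proper_coloring (@Hedge k) c ->
  forall (i1 i2 : 'I_k), odd i1 = odd i2 ->
  forall j : 'I_3, c (i1, j) = c (i2, j).
Proof.
move=> proper_c i1 i2 par j.
apply: (period_two_parity (g := fun i => row c i j)) par => q q2 q2E.
exact: (row_shift2 proper_c q2E j).
Qed.
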